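(* Assume $\lambda_{\max}(L_1)>\lambda_{\max}(L_2)$, that $\lambda_N^1:=\lambda_{\max}(L_1)$ is a simple eigenvalue of $L_1$ with eigenvector $v_N^1$, and that the nodal set $\{x: v_N^1(x)=0\}$ is non-empty. Let $c_1^*>0$ be the largest budget such that for $0\le c<c_1^*$ the optimal largest eigenvalue $\lambda_n^*(c)$ is simple, and let $W^*=\operatorname{diag}(w^* )$ where $w^*$ is an optimal weight at budget $c=c_1^*$. Define $\bar L=\frac{L_1+L_2}{2}-\lambda_N^1 I$, $\tilde L=\frac{L_1-L_2}{2}$ and $Q=\bar L-\tilde L\bar L^\dagger\tilde L$, where $\dagger$ denotes the Moore–Penrose pseudoinverse. Then the matrix $Q+2W^*$ has a zero eigenvalue.
   Context: A multiplex network consists of two layers $G_1,G_2$, simple undirected graphs on $N$ vertices each with Laplacians $L_1,L_2\in\mathbb{R}^{N\times N}$; the $i$-th vertex of $G_1$ is joined by an interlayer edge of weight $w_i\ge0$ to the $i$-th vertex of $G_2$. With $W=\operatorname{diag}(w)$, the multiplex Laplacian is $L(w)=\begin{bmatrix}L_1+W&-W\\-W&L_2+W\end{bmatrix}$. For a budget $c\ge0$, $\lambda_n^*(c)=\min\{\lambda_{\max}(L(w)):w\ge0,\ w^T\boldsymbol 1=c\}$, and a weight attaining this minimum is called optimal. *)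

From HB Require Import structures.
From mathcomp Require Import all_boot all_order all_algebra.
From mathcomp Require Import classical_sets reals.
Set Implicit Arguments. Unset Strict Implicit. Unset Printing Implicit Defensive.
Import Order.TTheory GRing.Theory Num.Theory.
Local Open Scope ring_scope.
Local Open Scope classical_set_scope.

Section Multiplex.
Variable R : realType.

Definition simple_graph (N : nat) (e : rel 'I_N) : Prop :=
  (forall i, ~~ e i i) /\ (forall i j, e i j = e j i).

Definition laplacian (N : nat) (e : rel 'I_N) : 'M[R]_N :=
  \matrix_(i, j) (if i == j then (#|[set k | e i k]|)%:R
                  else if e i j then -1 else 0).

Definition multiplex_laplacian (N : nat) (L1 L2 : 'M[R]_N) (w : 'rV[R]_N)
  : 'M[R]_(N + N) :=
  block_mx (L1 + diag_mx w) (- diag_mx w) (- diag_mx w) (L2 + diag_mx w).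

Definition lambda_max (n : nat) (A : 'M[R]_n) : R :=
  sup [set mu : R | eigenvalue A mu].

Definition simple_eigenvalue (n : nat) (A : 'M[R]_n) (mu : R) : Prop :=
  mup mu (char_poly A) = 1%N.

Definition admissible (N : nat) (c : R) (w : 'rV[R]_N) : Prop :=
  (forall i, 0 <= w 0 i) /\ \sum_i w 0 i = c.

Definition optimal_weight (N : nat) (L1 L2 : 'M[R]_N) (c : R) (w : 'rV[R]_N)
  : Prop :=
  admissible c w /\
  forall w', admissible c w' ->
    lambda_max (multiplex_laplacian L1 L2 w)
      <= lambda_max (multiplex_laplacian L1 L2 w').

Definition optimal_simple (N : nat) (L1 L2 : 'M[R]_N) (c : R) : Prop :=
  forall w, optimal_weight L1 L2 c w ->
    simple_eigenvalue (multiplex_laplacian L1 L2 w)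
                      (lambda_max (multiplex_laplacian L1 L2 w)).

Definition moore_penrose (n : nat) (A X : 'M[R]_n) : Prop :=
  [/\ A *m X *m A = A, X *m A *m X = X,
      (A *m X)^T = A *m X & (X *m A)^T = X *m A].

End Multiplex.

From HB Require Import structures.
From mathcomp Require Import all_boot all_order all_algebra.
From mathcomp Require Import classical_sets reals complex.
From mathcomp Require Import ring lra.
Import Order.TTheory GRing.Theory Num.Theory.
Set Implicit Arguments. Unset Strict Implicit. Unset Printing Implicit Defensive.
Local Open Scope ring_scope.
Local Open Scope classical_set_scope.

(* Let v be a lam1-eigenvector of L1 vanishing at x0, lam1 = lambda_max L1.
   As lambda_max L2 < lam1, Lbar is negative definite, so Ldag = Lbar^-1, and
   v Ltil = - v Lbar then gives v Q = 0; it remains to show v W* = 0.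
   Testing L(w) on (v, 0) gives lambda_max L(w) >= lam1 for every w >= 0, with
   equality only if w_i v_i = 0 for all i, so it suffices that the optimal value
   at budget c1 is lam1.  Put the budget t on the interlayer edge at x0 alone:
   the Rayleigh quotients of L(t e_x0) are affine and nondecreasing in t, so
   they stay below lam1 exactly on a closed interval [0, ts].  If ts < c1, then
   ts e_x0 is optimal at budget ts, so lam1 is a simple eigenvalue of
   L(ts e_x0); its eigenvector (v, 0) does not see the edge at x0, and the
   spectral gap absorbs a further increase of t, contradicting maximality. *)

Lemma char_poly_conj (F : comNzRingType) n (A B C : 'M[F]_n) :
  C *m B = 1%:M -> char_poly (C *m A *m B) = char_poly A.
Proof.
move=> CB; pose Cp := map_mx polyC C; pose Bp := map_mx polyC B.
have CBp : Cp *m Bp = 1%:M by rewrite -map_mxM CB map_mx1.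
have eX : ('X%:M : 'M[{poly F}]_n) = Cp *m 'X%:M *m Bp.
  by rewrite mul_mx_scalar -scalemxAl CBp scalemx1.
rewrite /char_poly /char_poly_mx !map_mxM -/Cp -/Bp {1}eX -mulmxBl -mulmxBr.
by rewrite !det_mulmx mulrAC -det_mulmx CBp det1 mul1r.
Qed.

Lemma penrose1_unitmx (F : fieldType) n (A X : 'M[F]_n) :
  A \in unitmx -> A *m X *m A = A -> A *m X = 1%:M.
Proof. by move=> A_unit AXA; rewrite -[A *m X](mulmxK A_unit) AXA mulmxV. Qed.

Lemma schur_complement_kernel (F : fieldType) n (B T X : 'M[F]_n) (v : 'rV[F]_n) :
  B *m X = 1%:M -> v *m T = - (v *m B) -> v *m (B - T *m X *m T) = 0.
Proof.
move=> BX vT; rewrite mulmxBr !mulmxA vT !mulNmx -(mulmxA _ B) BX mulmx1 vT.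
by rewrite opprK subrr.
Qed.

Section RealSymmetric.
Variable R : rcfType.
Implicit Types (n : nat).

Definition dotr n (x y : 'rV[R]_n) : R := (x *m y^T) 0 0.
Definition sqnorm n (x : 'rV[R]_n) : R := dotr x x.
Definition qform n (A : 'M[R]_n) (x : 'rV[R]_n) : R := (x *m A *m x^T) 0 0.

Lemma mul_rV_tr_rV n m (x y : 'rV[R]_n) (z : 'rV[R]_m) :
  x *m y^T *m z = dotr x y *: z.
Proof. by rewrite [x *m y^T]mx11_scalar mul_scalar_mx. Qed.

Lemma dotrE n (x y : 'rV[R]_n) : dotr x y = \sum_i x 0 i * y 0 i.
Proof. by rewrite /dotr mxE; apply: eq_bigr => i _; rewrite mxE. Qed.

Lemma dotrC n (x y : 'rV[R]_n) : dotr x y = dotr y x.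
Proof. by rewrite !dotrE; apply: eq_bigr => i _; rewrite mulrC. Qed.

Lemma dotrBr n (x y z : 'rV[R]_n) : dotr x (y - z) = dotr x y - dotr x z.
Proof. by rewrite !dotrE -sumrB; apply: eq_bigr => i _; rewrite !mxE mulrBr. Qed.

Lemma sqnormE n (x : 'rV[R]_n) : sqnorm x = \sum_i x 0 i ^+ 2.
Proof. by rewrite /sqnorm dotrE; apply: eq_bigr => i _; rewrite expr2. Qed.

Lemma sqnorm_ge0 n (x : 'rV[R]_n) : 0 <= sqnorm x.
Proof. by rewrite sqnormE sumr_ge0 // => i _; rewrite sqr_ge0. Qed.

Lemma sqnorm_eq0 n (x : 'rV[R]_n) : (sqnorm x == 0) = (x == 0).
Proof.
apply/idP/eqP => [|->]; last by rewrite sqnormE big1 // => i _; rewrite mxE expr0n.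
rewrite sqnormE psumr_eq0 => [/allP sq_eq0|i _]; last exact: sqr_ge0.
apply/rowP => i; rewrite mxE.
by apply/eqP; rewrite -sqrf_eq0; exact: (implyP (sq_eq0 i (mem_index_enum i))).
Qed.

Lemma sqnorm0 n : sqnorm (0 : 'rV[R]_n) = 0.
Proof. by apply/eqP; rewrite sqnorm_eq0. Qed.

Lemma sqnorm_gt0 n (x : 'rV[R]_n) : (0 < sqnorm x) = (x != 0).
Proof. by rewrite lt_def sqnorm_eq0 sqnorm_ge0 andbT. Qed.

Lemma sqnormZ n a (x : 'rV[R]_n) : sqnorm (a *: x) = a ^+ 2 * sqnorm x.
Proof. by rewrite !sqnormE mulr_sumr; apply: eq_bigr => i _; rewrite mxE exprMn. Qed.

Lemma sqnormB n (x y : 'rV[R]_n) :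
  sqnorm (x - y) = sqnorm x - 2 * dotr x y + sqnorm y.
Proof.
rewrite !sqnormE dotrE mulr_sumr -sumrB -big_split /=.
by apply: eq_bigr => i _; rewrite !mxE; ring.
Qed.

Lemma sqnorm_row_mx n (a b : 'rV[R]_n) : sqnorm (row_mx a b) = sqnorm a + sqnorm b.
Proof. by rewrite /sqnorm /dotr tr_row_mx mul_row_col mxE. Qed.

Lemma qform_eigen n (A : 'M[R]_n) x a : x *m A = a *: x -> qform A x = a * sqnorm x.
Proof. by rewrite /qform => ->; rewrite -scalemxAl mxE. Qed.

Lemma qform0 n (A : 'M[R]_n) : qform A 0 = 0.
Proof. by rewrite /qform !mul0mx mxE. Qed.

Lemma qformD n (A B : 'M[R]_n) x : qform (A + B) x = qform A x + qform B x.
Proof. by rewrite /qform mulmxDr mulmxDl mxE. Qed.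

Lemma qformN n (A : 'M[R]_n) x : qform (- A) x = - qform A x.
Proof. by rewrite /qform mulmxN mulNmx mxE. Qed.

Lemma qformZ n a (A : 'M[R]_n) x : qform (a *: A) x = a * qform A x.
Proof. by rewrite /qform -scalemxAr -scalemxAl mxE. Qed.

Lemma qform_scalar n a x : qform (a%:M : 'M[R]_n) x = a * sqnorm x.
Proof. by apply: qform_eigen; rewrite mul_mx_scalar. Qed.

Lemma qform_mulmx m n (B : 'M[R]_(m, n)) (A : 'M[R]_n) x :
  qform (B *m A *m B^T) x = qform A (x *m B).
Proof. by rewrite /qform !mulmxA trmx_mul mulmxA. Qed.

Lemma qform_diag n (d x : 'rV[R]_n) : qform (diag_mx d) x = \sum_i d 0 i * x 0 i ^+ 2.
Proof. by rewrite /qform mxE; apply: eq_bigr => i _; rewrite mul_mx_diag !mxE; ring. Qed.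

Lemma qform_block_diag m n (A : 'M[R]_m) (B : 'M[R]_n) a b :
  qform (block_mx A 0 0 B) (row_mx a b) = qform A a + qform B b.
Proof.
by rewrite /qform mul_row_block !mulmx0 !addr0 !add0r tr_row_mx mul_row_col mxE.
Qed.

Section Orthogonal.
Variables (n : nat) (P : 'M[R]_n).
Hypothesis PPt : P *m P^T = 1%:M.

Lemma orthomx_trC : P^T *m P = 1%:M.
Proof. exact: mulmx1C. Qed.

Lemma sqnorm_orthomx x : sqnorm (x *m P^T) = sqnorm x.
Proof.
by rewrite /sqnorm /dotr trmx_mul trmxK mulmxA -(mulmxA x) orthomx_trC mulmx1.
Qed.

Variable d : 'rV[R]_n.
Local Notation A := (P^T *m diag_mx d *m P).

Lemma qform_spectral x : qform A x = \sum_k d 0 k * (x *m P^T) 0 k ^+ 2.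
Proof. by rewrite -[P in _ *m P]trmxK qform_mulmx qform_diag. Qed.

Lemma spectral_eigenvector (x : 'rV[R]_n) mu k : x *m A = mu *: x ->
  d 0 k * (x *m P^T) 0 k = mu * (x *m P^T) 0 k.
Proof.
move=> /(congr1 (mulmx^~ P^T)); rewrite -!mulmxA PPt mulmx1 !mulmxA -scalemxAl.
by move=> /rowP/(_ k); rewrite mul_mx_diag !mxE mulrC.
Qed.

Lemma eigenvalue_spectral (k : 'I_n) : eigenvalue A (d 0 k).
Proof.
apply/eigenvalueP; exists (delta_mx 0 k *m P).
  rewrite !mulmxA -(mulmxA _ P) PPt mulmx1 -[_ *m diag_mx d]rowE row_diag_mx.
  by rewrite -scalemxAl.
rewrite mulmx_free_eq0 ?row_free_unit; last by case: (mulmx1_unit PPt).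
by apply/eqP => /rowP/(_ k); rewrite !mxE !eqxx => /eqP; rewrite oner_eq0.
Qed.

Lemma char_poly_spectral : char_poly A = \prod_k ('X - (d 0 k)%:P).
Proof.
rewrite char_poly_conj ?orthomx_trC // char_poly_trig ?diag_mx_is_trig //.
by apply: eq_bigr => k _; rewrite mxE eqxx.
Qed.

Lemma spectral_mup_ge2 mu (k1 k2 : 'I_n) : k1 != k2 -> d 0 k1 = mu -> d 0 k2 = mu ->
  (2 <= mup mu (char_poly A))%N.
Proof.
move=> k12 d1 d2; rewrite char_poly_spectral mup_geq ?monic_neq0 //; last first.
  by apply: monic_prod => k _; apply: monicXsubC.
rewrite (bigD1 k1) //= (bigD1 k2) 1?eq_sym //= d1 d2 mulrA -expr2.
exact: dvdp_mulr.
Qed.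

Lemma qform_spectral_le a x : (forall k, d 0 k <= a) -> qform A x <= a * sqnorm x.
Proof.
move=> d_le; rewrite qform_spectral -(sqnorm_orthomx x) sqnormE mulr_sumr.
by apply: ler_sum => k _; apply: ler_wpM2r; [exact: sqr_ge0 | exact: d_le].
Qed.

Lemma qform_spectral_gap a gam k0 x : d 0 k0 = a ->
  (forall k, k != k0 -> d 0 k + gam <= a) ->
  qform A x + gam * \sum_(k | k != k0) (x *m P^T) 0 k ^+ 2 <= a * sqnorm x.
Proof.
move=> dk0 d_le; rewrite qform_spectral -(sqnorm_orthomx x) sqnormE !mulr_sumr.
rewrite (bigD1 k0) //= [in leRHS](bigD1 k0) //= dk0 -addrA lerD2l -big_split /=.
by apply: ler_sum => k kk0; rewrite -mulrDl ler_wpM2r ?sqr_ge0 ?d_le.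
Qed.

End Orthogonal.

Definition reflection n (w : 'rV[R]_n) : 'M[R]_n :=
  1%:M - (2 / sqnorm w) *: (w^T *m w).

Lemma reflection_tr n (w : 'rV[R]_n) : (reflection w)^T = reflection w.
Proof. by rewrite /reflection linearB /= linearZ /= trmx_mul trmxK trmx1. Qed.

Lemma reflection_orthomx n (w : 'rV[R]_n) : w != 0 ->
  reflection w *m (reflection w)^T = 1%:M.
Proof.
rewrite -sqnorm_gt0 => w_gt0; rewrite reflection_tr /reflection.
have ww : w^T *m w *m (w^T *m w) = sqnorm w *: (w^T *m w).
  by rewrite mulmxA -(mulmxA w^T) [w *m w^T]mx11_scalar mul_mx_scalar -scalemxAl.
rewrite mulmxBl !mulmxBr mul1mx mulmx1 -!scalemxAl -!scalemxAr mul1mx ww !scalerA.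
have -> : 2 / sqnorm w * (2 / sqnorm w) * sqnorm w = 2 / sqnorm w + 2 / sqnorm w.
  by field; rewrite gt_eqF.
by rewrite scalerDl opprB addrK subrK.
Qed.

Lemma reflection_swap n (a b : 'rV[R]_n) : sqnorm a = sqnorm b -> a != b ->
  b *m reflection (a - b) = a.
Proof.
move=> ab; rewrite -subr_eq0 -sqnorm_eq0 => nz.
rewrite /reflection mulmxBr mulmx1 -scalemxAr mulmxA mul_rV_tr_rV scalerA.
have -> : 2 / sqnorm (a - b) * dotr b (a - b) = -1.
  move: nz; rewrite sqnormB dotrBr (dotrC b a) -/(sqnorm b) -ab => nz.
  by field; move: nz; apply: contra => /eqP h; apply/eqP; lra.
by rewrite scaleN1r opprK addrC subrK.
Qed.

Lemma orthomx_row0 n (u : 'rV[R]_n.+1) : sqnorm u = 1 ->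
  exists2 H : 'M[R]_n.+1, H *m H^T = 1%:M & row 0 H = u.
Proof.
move=> u1; have [<-|ue] := eqVneq (delta_mx 0 0) u.
  by exists 1%:M; rewrite ?trmx1 ?mulmx1 ?row1.
exists (reflection (u - delta_mx 0 0)).
  by apply: reflection_orthomx; rewrite subr_eq0 eq_sym.
rewrite rowE reflection_swap 1?eq_sym // u1 sqnormE.
rewrite (bigD1 0) //= big1 => [|i /negbTE i0]; rewrite !mxE ?i0 /= ?expr0n //.
by rewrite expr1n addr0.
Qed.

(* Over R[i] the matrix is Hermitian, and Hermitian matrices have real spectra. *)
Lemma symmetric_eigenvalue n (A : 'M[R]_n.+1) : A^T = A -> exists mu, eigenvalue A mu.
Proof.
move=> sA; pose AC := map_mx (real_complex R) A.
have AC_herm : AC \is hermsymmx.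
  apply: realsym_hermsym.
    by apply/is_hermitianmxP; rewrite expr0 scale1r map_mx_id // map_trmx sA.
  by apply/mxOverP => i j; rewrite mxE; apply/complex_realP; exists (A i j).
have /orthomx_spectralP AC_diag := hermitian_normalmx AC_herm.
set U := spectralmx AC in AC_diag; set d := spectral_diag AC in AC_diag.
have d_real : d 0 0 \is Num.real := mxOverP (hermitian_spectral_diag_real AC_herm) 0 0.
have : eigenvalue AC (d 0 0).
  apply/eigenvalueP; exists (delta_mx 0 0 *m U).
    rewrite AC_diag !mulmxA mulmxK ?spectral_unit //.
    by rewrite -[_ *m diag_mx d]rowE row_diag_mx -scalemxAl.
  rewrite mulmx_free_eq0 ?row_free_unit ?spectral_unit //.
  by apply/eqP => /matrixP/(_ 0 0); rewrite !mxE !eqxx => /eqP; rewrite oner_eq0.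
rewrite eigenvalue_root_char /AC -map_char_poly -(RRe_real d_real) fmorph_root.
by rewrite -eigenvalue_root_char; exists (complex.Re (d 0 0)).
Qed.

Lemma orthomx_deflate n (A H : 'M[R]_(1 + n)) mu : A^T = A -> H *m H^T = 1%:M ->
  row 0 H *m A = mu *: row 0 H ->
  H *m A *m H^T = block_mx mu%:M 0 0 (drsubmx (H *m A *m H^T)).
Proof.
move=> sA HHt eig; set M := H *m A *m H^T.
have sM : M^T = M by rewrite !trmx_mul trmxK sA mulmxA.
have M0 : row 0 M = mu *: row 0 1%:M by rewrite !row_mul eig -scalemxAl -row_mul HHt.
have M0j j : M 0 j = mu * (0 == j)%:R by have /rowP/(_ j) := M0; rewrite !mxE.
have l0 : lshift n (0 : 'I_1) = 0 by apply: val_inj.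
clearbody M.
rewrite -[M in LHS]submxK; congr block_mx; apply/matrixP => i j; rewrite !ord1 !mxE.
- by rewrite l0 M0j eqxx mulr1.
- by rewrite l0 M0j mulr0.
- by rewrite -sM mxE l0 M0j mulr0.
Qed.

Theorem symmetric_spectral n (A : 'M[R]_n) : A^T = A ->
  exists P : 'M[R]_n, exists2 d : 'rV[R]_n,
    P *m P^T = 1%:M & A = P^T *m diag_mx d *m P.
Proof.
elim: n A => [|n IH] A sA.
  by exists 1%:M, 0; rewrite ?trmx1 ?mulmx1 //; apply/matrixP => [[]].
have [mu /eigenvalueP [p pA p_neq0]] := symmetric_eigenvalue sA.
pose u := (Num.sqrt (sqnorm p))^-1 *: p.
have u1 : sqnorm u = 1.
  have p_gt0 : 0 < sqnorm p by rewrite sqnorm_gt0.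
  by rewrite sqnormZ exprVn sqr_sqrtr ?ltW // mulVf // gt_eqF.
have [H HHt Hu] := orthomx_row0 u1.
have HtH := mulmx1C HHt.
have HA : row 0 H *m A = mu *: row 0 H.
  by rewrite Hu -scalemxAl pA !scalerA mulrC.
have M_def := orthomx_deflate sA HHt HA.
set A' := drsubmx _ in M_def.
have sA' : A'^T = A' by rewrite /A' trmx_drsub !trmx_mul trmxK sA mulmxA.
have [P' [d' P'P't A'_def]] := IH A' sA'.
pose B : 'M[R]_(1 + n) := block_mx 1%:M 0 0 P'.
have BBt : B *m B^T = 1%:M.
  rewrite tr_block_mx !trmx0 trmx1 mulmx_block !mulmx0 !mul0mx !mulmx1 !addr0 !add0r.
  by rewrite P'P't -scalar_mx_block.
exists (B *m H), (row_mx mu%:M d').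
  by rewrite trmx_mul mulmxA -(mulmxA B) HHt mulmx1.
have -> : A = H^T *m (H *m A *m H^T) *m H.
  by rewrite !mulmxA HtH mul1mx -mulmxA HtH mulmx1.
rewrite M_def A'_def trmx_mul -!mulmxA; congr (_ *m _); rewrite !mulmxA; congr (_ *m _).
have -> : diag_mx (row_mx mu%:M d') = block_mx mu%:M 0 0 (diag_mx d').
  by rewrite diag_mx_row; congr block_mx; apply/matrixP => i j; rewrite !ord1 !mxE.
rewrite /B (@tr_block_mx _ 1 n 1 n) !trmx0 trmx1 !(@mulmx_block _ 1 n 1 n 1 n).
by rewrite !mulmx0 !mul0mx !mulmx1 !mul1mx !addr0 !add0r mul0mx.
Qed.

End RealSymmetric.

Section LambdaMax.
Variable R : realType.

Lemma lambda_max_spectral n (P : 'M[R]_n) (d : 'rV[R]_n) : (0 < n)%N ->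
  P *m P^T = 1%:M ->
  exists2 k, lambda_max (P^T *m diag_mx d *m P) = d 0 k & forall j, d 0 j <= d 0 k.
Proof.
move=> n_gt0 PPt.
have [k _ dk_max] := @arg_maxP _ _ _ (Ordinal n_gt0) xpredT (fun k => d 0 k) isT.
have {}dk_max j : d 0 j <= d 0 k by apply: dk_max.
exists k => //; set A := P^T *m diag_mx d *m P.
have ub : ubound [set mu | eigenvalue A mu] (d 0 k).
  move=> mu /eigenvalueP [x xA x_neq0].
  have := qform_spectral_le PPt x dk_max.
  by rewrite (qform_eigen xA) ler_pM2r // sqnorm_gt0.
have dk_eigen := eigenvalue_spectral PPt d k.
by apply/le_anti; rewrite ge_sup ?ub_le_sup //; exists (d 0 k).
Qed.

Lemma qform_le_lambda_max n (A : 'M[R]_n) x : A^T = A ->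
  qform A x <= lambda_max A * sqnorm x.
Proof.
case: n A x => [|n] A x sA; first by rewrite [x]thinmx0 qform0 sqnorm0 mulr0.
have [P [d PPt ->]] := symmetric_spectral sA.
have [k -> dk_max] := lambda_max_spectral d (ltn0Sn n) PPt.
exact: qform_spectral_le.
Qed.

Section Symmetric.
Variables (n : nat) (A : 'M[R]_n).
Hypotheses (n_gt0 : (0 < n)%N) (sA : A^T = A).

Lemma eigenvalue_lambda_max : eigenvalue A (lambda_max A).
Proof.
have [P [d PPt ->]] := symmetric_spectral sA.
have [k -> _] := lambda_max_spectral d n_gt0 PPt.
exact: eigenvalue_spectral.
Qed.

Lemma lambda_max_le a : (forall x, qform A x <= a * sqnorm x) -> lambda_max A <= a.
Proof.
move=> le_a; have /eigenvalueP [x xA x_neq0] := eigenvalue_lambda_max.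
by have := le_a x; rewrite (qform_eigen xA) ler_pM2r // sqnorm_gt0.
Qed.

Lemma lambda_max_ge a x : x != 0 -> a * sqnorm x <= qform A x -> a <= lambda_max A.
Proof.
move=> x_neq0 /le_trans/(_ (qform_le_lambda_max x sA)).
by rewrite ler_pM2r // sqnorm_gt0.
Qed.

Lemma lambda_max_simple_gap u : simple_eigenvalue A (lambda_max A) ->
  u != 0 -> u *m A = lambda_max A *: u ->
  exists2 gam, 0 < gam & forall x, exists s,
    qform A x + gam * sqnorm (x - s *: u) <= lambda_max A * sqnorm x.
Proof.
move=> simple u_neq0 uA; have [P [d PPt A_def]] := symmetric_spectral sA.
have [k0 lamE d_le] := lambda_max_spectral d n_gt0 PPt.
rewrite -A_def in lamE; rewrite lamE in simple uA *; rewrite A_def in simple uA.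
have d_lt k : k != k0 -> d 0 k < d 0 k0.
  move=> kk0; rewrite lt_def d_le andbT; apply: contraTneq isT => dk.
  by have := spectral_mup_ge2 PPt kk0 (esym dk) erefl; rewrite simple.
pose y := u *m P^T.
have y_off k : k != k0 -> y 0 k = 0.
  move=> /d_lt/lt_eqF/negbT dk; have /eqP := spectral_eigenvector PPt k uA.
  by rewrite -subr_eq0 -mulrBl mulf_eq0 subr_eq0 (negbTE dk) => /eqP.
have y_k0 : y 0 k0 != 0.
  apply: contra u_neq0 => /eqP y0; rewrite -[u]mulmx1 -(orthomx_trC PPt) mulmxA -/y.
  suff -> : y = 0 by rewrite mul0mx.
  by apply/rowP => k; rewrite [RHS]mxE; case: (eqVneq k k0) => [->|/y_off].
pose gam := \big[Num.min/1]_(k | k != k0) (d 0 k0 - d 0 k).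
have gam_gt0 : 0 < gam by apply: lt_bigmin => // k /d_lt; rewrite subr_gt0.
exists gam => // x; exists ((x *m P^T) 0 k0 / y 0 k0).
have -> : sqnorm (x - (x *m P^T) 0 k0 / y 0 k0 *: u) =
          \sum_(k | k != k0) (x *m P^T) 0 k ^+ 2.
  rewrite -(sqnorm_orthomx PPt) mulmxBl -scalemxAl -/y; clearbody y.
  move: (x *m P^T) => z; rewrite sqnormE (bigD1 k0) //= !mxE divfK // subrr expr0n add0r.
  by apply: eq_bigr => k kk0; rewrite !mxE (y_off k) // mulr0 subr0.
rewrite A_def; apply: qform_spectral_gap => // k kk0.
by rewrite -lerBrDl; apply: bigmin_le_cond.
Qed.

End Symmetric.
End LambdaMax.

Section Multiplex.
Variables (R : realType) (N : nat) (L1 L2 : 'M[R]_N).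
Hypotheses (sL1 : L1^T = L1) (sL2 : L2^T = L2).
Local Notation LM w := (multiplex_laplacian L1 L2 w).

Lemma multiplex_laplacian_tr w : (LM w)^T = LM w.
Proof.
by rewrite /multiplex_laplacian tr_block_mx !linearD !linearN /= tr_diag_mx sL1 sL2.
Qed.

Lemma qform_multiplex w a b : qform (LM w) (row_mx a b) =
  qform L1 a + qform L2 b + \sum_i w 0 i * (a 0 i - b 0 i) ^+ 2.
Proof.
pose C : 'M[R]_(N + N, N) := col_mx 1%:M (- 1%:M).
have -> : LM w = block_mx L1 0 0 L2 + C *m diag_mx w *m C^T.
  rewrite tr_col_mx linearN /= trmx1 mul_col_mx mul1mx mulNmx mul1mx mul_col_row.
  by rewrite !mulmx1 !mulmxN !mulmx1 opprK add_block_mx !sub0r.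
rewrite qformD qform_block_diag qform_mulmx qform_diag /C mul_row_col mulmx1 mulmxN mulmx1.
by congr (_ + _); apply: eq_bigr => i _; rewrite !mxE.
Qed.

Variables (v : 'rV[R]_N) (x0 : 'I_N).
Local Notation lam1 := (lambda_max L1).
Hypotheses (v_neq0 : v != 0) (vL1 : v *m L1 = lam1 *: v) (v_x0 : v 0 x0 = 0).
Hypothesis L2_lt_L1 : lambda_max L2 < lam1.
Local Notation v0 := (row_mx v (0 : 'rV[R]_N)).

Let NN_gt0 : (0 < N + N)%N.
Proof. by rewrite addn_gt0 (leq_ltn_trans (leq0n x0) (ltn_ord x0)). Qed.

Lemma qform_multiplex_lift w :
  qform (LM w) v0 = lam1 * sqnorm v + \sum_i w 0 i * v 0 i ^+ 2.
Proof.
rewrite qform_multiplex (qform_eigen vL1) qform0 addr0.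
by congr (_ + _); apply: eq_bigr => i _; rewrite mxE subr0.
Qed.

Lemma row_mx_v0_neq0 : v0 != 0.
Proof. by apply: contraNneq v_neq0 => /(congr1 lsubmx); rewrite row_mxKl linear0 => ->. Qed.

Lemma lam1_le_lambda_max (w : 'rV[R]_N) : (forall i, 0 <= w 0 i) -> lam1 <= lambda_max (LM w).
Proof.
move=> w_ge0; apply: (lambda_max_ge (multiplex_laplacian_tr w) row_mx_v0_neq0).
rewrite qform_multiplex_lift sqnorm_row_mx sqnorm0 addr0 lerDl.
by apply: sumr_ge0 => i _; rewrite mulr_ge0 ?sqr_ge0.
Qed.

Definition plateau (w : 'rV[R]_N) := forall x, qform (LM w) x <= lam1 * sqnorm x.

Lemma lambda_max_plateau (w : 'rV[R]_N) : (forall i, 0 <= w 0 i) -> plateau w ->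
  lambda_max (LM w) = lam1.
Proof.
move=> w_ge0 w_plateau; apply/le_anti; rewrite lam1_le_lambda_max // andbT.
exact: (lambda_max_le NN_gt0 (multiplex_laplacian_tr w)).
Qed.

Definition edge_weight (t : R) : 'rV[R]_N := t *: delta_mx 0 x0.
Definition jump (x : 'rV[R]_(N + N)) := x 0 (lshift N x0) - x 0 (rshift N x0).

Lemma admissible_edge_weight t : 0 <= t -> admissible t (edge_weight t).
Proof.
move=> t_ge0; split => [i|]; first by rewrite !mxE mulr_ge0.
rewrite (bigD1 x0) //= big1 => [|i /negbTE ix0]; rewrite !mxE ?eqxx ?ix0 ?mulr0 //.
by rewrite mulr1 addr0.
Qed.

Lemma qform_edge_weight t x :
  qform (LM (edge_weight t)) x = qform (LM 0) x + t * jump x ^+ 2.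
Proof.
rewrite -{1 2}(hsubmxK x) !qform_multiplex [in RHS]big1 ?addr0 => [|i _]; last first.
  by rewrite mxE mul0r.
congr (_ + _); rewrite (bigD1 x0) //= big1 => [|i /negbTE ix0].
  by rewrite !mxE !eqxx mulr1 addr0.
by rewrite !mxE ix0 andbF mulr0 mul0r.
Qed.

Lemma jump_sqr_le x : jump x ^+ 2 <= 2 * sqnorm x.
Proof.
rewrite sqnormE (bigD1 (lshift N x0)) //= (bigD1 (rshift N x0)) ?eq_rlshift //=.
set a := x 0 _; set b := x 0 _; set r := \sum_(i | _) _.
have r_ge0 : 0 <= r by apply: sumr_ge0 => i _; exact: sqr_ge0.
rewrite /jump -/a -/b; have := sqr_ge0 (a + b); nra.
Qed.

Lemma plateau_edge_weight0 : plateau (edge_weight 0).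
Proof.
move=> x; rewrite qform_edge_weight mul0r addr0 -(hsubmxK x) qform_multiplex.
rewrite big1 => [|i _]; last by rewrite mxE mul0r.
rewrite addr0 sqnorm_row_mx mulrDr lerD ?qform_le_lambda_max //.
apply: le_trans (qform_le_lambda_max _ sL2) _.
by rewrite ler_wpM2r ?sqnorm_ge0 ?ltW.
Qed.

Lemma plateau_edge_weight_le s t : s <= t ->
  plateau (edge_weight t) -> plateau (edge_weight s).
Proof.
move=> st t_plateau x; apply: le_trans (t_plateau x).
by rewrite !qform_edge_weight lerD2l ler_wpM2r ?sqr_ge0.
Qed.

Lemma plateau_edge_weight_sup (S : set R) : S !=set0 ->
  (forall t, S t -> plateau (edge_weight t)) -> plateau (edge_weight (sup S)).
Proof.
move=> S_neq0 S_plateau x; rewrite qform_edge_weight.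
have := plateau_edge_weight0 x; rewrite qform_edge_weight mul0r addr0 => q0.
have [j0|j_neq0] := eqVneq (jump x) 0; first by rewrite j0 expr0n mulr0 addr0.
have j_gt0 : 0 < jump x ^+ 2 by rewrite lt_def sqr_ge0 sqrf_eq0 j_neq0.
suff : sup S <= (lam1 * sqnorm x - qform (LM 0) x) / jump x ^+ 2.
  by rewrite ler_pdivlMr // => ?; lra.
apply: ge_sup => // t /S_plateau/(_ x).
by rewrite qform_edge_weight ler_pdivlMr // => ?; lra.
Qed.

Lemma multiplex_lift_eigen w : v *m diag_mx w = 0 -> v0 *m LM w = lam1 *: v0.
Proof.
move=> vW; rewrite /multiplex_laplacian mul_row_block !mul0mx !addr0 mulmxDr vL1 mulmxN vW.
by rewrite addr0 oppr0 scale_row_mx scaler0.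
Qed.

Lemma plateau_edge_weight_extend t : 0 <= t -> plateau (edge_weight t) ->
  simple_eigenvalue (LM (edge_weight t)) lam1 ->
  exists2 gam, 0 < gam & plateau (edge_weight (t + gam)).
Proof.
move=> t_ge0 t_plateau simple.
have [w_ge0 _] := admissible_edge_weight t_ge0.
have lamE := lambda_max_plateau w_ge0 t_plateau.
have v0_eigen : v0 *m LM (edge_weight t) = lam1 *: v0.
  apply: multiplex_lift_eigen; apply/rowP => i; rewrite mul_mx_diag !mxE.
  by have [->|] := eqVneq i x0; rewrite ?v_x0 ?mul0r ?andbF ?mulr0.
rewrite -lamE in simple v0_eigen.
have [gam gam_gt0 gap] := lambda_max_simple_gap NN_gt0 (multiplex_laplacian_tr _)
  simple row_mx_v0_neq0 v0_eigen.
exists (gam / 2); first by rewrite divr_gt0.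
move=> x; have [s] := gap x; rewrite lamE => gap_x.
rewrite qform_edge_weight mulrDl addrA -qform_edge_weight.
have -> : jump x = jump (x - s *: v0).
  rewrite /jump !(row_mxEl, row_mxEr, mxE) v_x0.
  by rewrite mulr0 !subr0.
have := jump_sqr_le (x - s *: v0); nra.
Qed.

Lemma plateau_edge_weight_budget (c1 : R) : 0 <= c1 ->
  (forall c : R, 0 <= c -> c < c1 -> optimal_simple L1 L2 c) ->
  plateau (edge_weight c1).
Proof.
move=> c1_ge0 simple_below.
pose S := [set t | 0 <= t <= c1 /\ plateau (edge_weight t)].
have S0 : S 0 by split; [rewrite lexx c1_ge0 | exact: plateau_edge_weight0].
have S_ub : ubound S c1 by move=> t [/andP[]].
have S_le_sup := @ub_le_sup _ S (ex_intro _ c1 S_ub).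
have ts_plateau : plateau (edge_weight (sup S)).
  by apply: plateau_edge_weight_sup => [|t []]; first by exists 0.
have ts_ge0 : 0 <= sup S := S_le_sup 0 S0.
have := ge_sup (ex_intro _ 0 S0) S_ub; rewrite le_eqVlt => /orP[/eqP <- //|ts_lt].
have [w_ge0 _] := admissible_edge_weight ts_ge0.
have opt : optimal_weight L1 L2 (sup S) (edge_weight (sup S)).
  split=> [|w' [w'_ge0 _]]; first exact: admissible_edge_weight.
  by rewrite lambda_max_plateau // lam1_le_lambda_max.
have := simple_below _ ts_ge0 ts_lt _ opt; rewrite lambda_max_plateau // => simple.
have [gam gam_gt0 ext] := plateau_edge_weight_extend ts_ge0 ts_plateau simple.
pose t' := Num.min (sup S + gam) c1.
have t'_S : S t'.
  split; first by rewrite ge_min lexx orbT andbT le_min c1_ge0 andbT addr_ge0 // ltW.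
  have t'_le : t' <= sup S + gam by rewrite ge_min lexx.
  exact: plateau_edge_weight_le t'_le ext.
have : sup S < t' by rewrite lt_min ts_lt ltrDl gam_gt0.
by rewrite ltNge S_le_sup.
Qed.

Lemma optimal_weight_annihilates (c1 : R) (w : 'rV[R]_N) : 0 <= c1 ->
  (forall c : R, 0 <= c -> c < c1 -> optimal_simple L1 L2 c) ->
  optimal_weight L1 L2 c1 w -> v *m diag_mx w = 0.
Proof.
move=> c1_ge0 simple_below [[w_ge0 _] w_opt].
have [e_ge0 _] := admissible_edge_weight c1_ge0.
have lam_w : lambda_max (LM w) <= lam1.
  rewrite -(lambda_max_plateau e_ge0 (plateau_edge_weight_budget c1_ge0 simple_below)).
  exact/w_opt/admissible_edge_weight.
have := qform_le_lambda_max v0 (multiplex_laplacian_tr w).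
rewrite qform_multiplex_lift sqnorm_row_mx sqnorm0 addr0.
move=> /le_trans/(_ (ler_wpM2r (sqnorm_ge0 v) lam_w)); rewrite gerDl => sum_le0.
have terms_ge0 i : 0 <= w 0 i * v 0 i ^+ 2 by rewrite mulr_ge0 ?sqr_ge0.
have sum_eq0 : \sum_i w 0 i * v 0 i ^+ 2 = 0.
  by apply/le_anti; rewrite sum_le0 sumr_ge0.
apply/rowP => i; rewrite mul_mx_diag !mxE.
have /(_ i isT)/eqP := psumr_eq0P (fun j _ => terms_ge0 j) sum_eq0.
by rewrite mulf_eq0 sqrf_eq0 => /orP[]/eqP->; rewrite ?mulr0 ?mul0r.
Qed.

Lemma Lbar_unitmx : 2^-1 *: (L1 + L2) - lam1%:M \in unitmx.
Proof.
rewrite unitmxE unitfE; apply/negP => /det0P [z z_neq0 zL].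
have : qform (2^-1 *: (L1 + L2) - lam1%:M) z = 0 by rewrite /qform zL mul0mx mxE.
rewrite qformD qformN qformZ qformD qform_scalar.
have := qform_le_lambda_max z sL1; have := qform_le_lambda_max z sL2.
have : lambda_max L2 * sqnorm z < lam1 * sqnorm z by rewrite ltr_pM2r ?sqnorm_gt0.
lra.
Qed.

Lemma half_diff_eigen :
  v *m (2^-1 *: (L1 - L2)) = - (v *m (2^-1 *: (L1 + L2) - lam1%:M)).
Proof.
rewrite mulmxBr -!scalemxAr mulmxBr mulmxDr vL1 mul_mx_scalar.
by apply/rowP => i; rewrite !mxE; lra.
Qed.

End Multiplex.

Lemma laplacian_tr {R : realType} N (e : rel 'I_N) :
  simple_graph e -> (laplacian R e)^T = laplacian R e.
Proof.
by move=> [_ e_sym]; apply/matrixP => i j; rewrite !mxE eq_sym e_sym; case: eqP => [->|].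
Qed.

Theorem mainTheorem6 (R : realType) (N : nat) (e1 e2 : rel 'I_N)
  (c1 : R) (wstar : 'rV[R]_N) (Ldag : 'M[R]_N) :
  simple_graph e1 -> simple_graph e2 ->
  let L1 : 'M[R]_N := laplacian R e1 in
  let L2 : 'M[R]_N := laplacian R e2 in
  let lam1 := lambda_max L1 in
  lambda_max L2 < lam1 ->
  simple_eigenvalue L1 lam1 ->
  (exists v : 'rV[R]_N, [/\ v != 0, v *m L1 = lam1 *: v & exists x, v 0 x = 0]) ->
  0 < c1 ->
  (forall c : R, 0 <= c -> c < c1 -> optimal_simple L1 L2 c) ->
  (forall C : R, c1 < C -> exists c : R, [/\ 0 <= c, c < C & ~ optimal_simple L1 L2 c]) ->
  optimal_weight L1 L2 c1 wstar ->
  let Lbar : 'M[R]_N := 2^-1 *: (L1 + L2) - lam1%:M in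
  let Ltil : 'M[R]_N := 2^-1 *: (L1 - L2) in
  moore_penrose Lbar Ldag ->
  let Q : 'M[R]_N := Lbar - Ltil *m Ldag *m Ltil in
  eigenvalue (Q + 2 *: diag_mx wstar) 0.
Proof.
move=> g1 g2 L1 L2 lam1 L2_lt _ [v [v_neq0 vL1 [x0 v_x0]]] c1_gt0 simple_below _.
move=> wstar_opt Lbar Ltil [LXL _ _ _]; cbv zeta.
have sL1 : L1^T = L1 := laplacian_tr g1.
have sL2 : L2^T = L2 := laplacian_tr g2.
have LbarX : Lbar *m Ldag = 1%:M.
  exact: penrose1_unitmx (Lbar_unitmx sL1 sL2 L2_lt) LXL.
have vQ : v *m (Lbar - Ltil *m Ldag *m Ltil) = 0.
  exact: schur_complement_kernel LbarX (half_diff_eigen L2 vL1).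
have vW := optimal_weight_annihilates sL1 sL2 v_neq0 vL1 v_x0 L2_lt (ltW c1_gt0)
  simple_below wstar_opt.
apply/eigenvalueP; exists v => //.
by rewrite scale0r mulmxDr vQ -scalemxAr vW scaler0 addr0.
Qed.
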